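(* Let $C$ be an independent set of the Kneser graph of flags of type $\{2,3\}$ of $\mathrm{PG}(6,q)$ such that every plane and every solid of $\mathrm{PG}(6,q)$ occurs in at most $q+1$ flags of $C$. For a point $P$ let $\Delta_P(C)$ be the set of flags $(E,S)\in C$ with $P\in E$. Let $P_1,P_2,P_3$ be non-collinear points. (i) If $|\Delta_{P_1}(C)|>(q+1)(6q^6+10q^5+17q^4+15q^3+15q^2+9q+5)$, then there are flags $f_i=(E_i,S_i)\in C$, $i\in\{1,2,3\}$, with $\dim\langle E_1,E_2,E_3\rangle\ge 5$, $P_2,P_3\notin S_1,S_2,S_3$, and $E_i\cap E_j=P_1$ and $P_2,P_3\notin\langle E_i,E_j\rangle$ for all distinct $i,j$. (ii) If there are flags $f_1,f_2,f_3$ with the properties in (i) and $|\Delta_{P_2}(C)|>(q+1)(6q^6+10q^5+17q^4+18q^3+15q^2+9q+5)$, then there are flags $f_i'=(E_i',S_i')\in C$, $i\in\{1,2,3\}$, with $\dim\langle E_1',E_2',E_3'\rangle\ge 5$, $P_1,P_3\notin S_1',S_2',S_3'$, $\dim(S_i\cap S_j')\le 1$ for all $i,j\in\{1,2,3\}$, and $E_i'\cap E_j'=P_2$ and $P_1,P_3\notin\langle E_i',E_j'\rangle$ for all distinct $i,j$.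
   Context: Dimensions are projective (points 0, planes 2, solids 3). A flag of type $\{2,3\}$ is a pair $(E,S)$ of a plane $E$ and a solid $S$ with $E\subseteq S$; in the Kneser graph distinct flags $(E,S),(E',S')$ are adjacent iff $E\cap S'=\emptyset$ and $E'\cap S=\emptyset$. $\langle\cdot\rangle$ denotes the span. *)

From HB Require Import structures.
From mathcomp Require Import all_boot all_order all_algebra all_field.
From mathcomp Require Import finmap.
Set Implicit Arguments. Unset Strict Implicit. Unset Printing Implicit Defensive.
Import GRing.Theory.
Local Open Scope ring_scope.
Local Open Scope fset_scope.

(* PG(6,q) over a finite field F with q = #|F| elements is modelled by the
   lattice of subspaces of the 7-dimensional F-vector space 'rV[F]_7.
   Projective dimension = vector dimension - 1: points have \dim 1,
   lines \dim 2, planes \dim 3, solids \dim 4. *)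
Definition pg6 (F : finFieldType) := 'rV[F]_7.
Definition sub6 (F : finFieldType) := {vspace 'rV[F]_7}.

Definition flag (F : finFieldType) := (sub6 F * sub6 F)%type.

Definition is_point (F : finFieldType) (P : sub6 F) : bool := \dim P == 1%N.

Definition is_flag23 (F : finFieldType) (f : flag F) : bool :=
  [&& \dim f.1 == 3%N, \dim f.2 == 4%N & (f.1 <= f.2)%VS].

Definition kneser_adj (F : finFieldType) (f g : flag F) : bool :=
  [&& f != g, (f.1 :&: g.2)%VS == 0%VS & (g.1 :&: f.2)%VS == 0%VS].

Definition indep_flags (F : finFieldType) (C : {fset flag F}) : Prop :=
  (forall f, f \in C -> is_flag23 f) /\
  (forall f g, f \in C -> g \in C -> ~~ kneser_adj f g).

Definition bounded_mult (F : finFieldType) (C : {fset flag F}) : Prop :=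
  (forall E : sub6 F, (#|` [fset f in C | f.1 == E]| <= #|F|.+1)%N) /\
  (forall S : sub6 F, (#|` [fset f in C | f.2 == S]| <= #|F|.+1)%N).

Definition Delta (F : finFieldType) (P : sub6 F) (C : {fset flag F}) :
  {fset flag F} := [fset f in C | (P <= f.1)%VS].

Definition noncollinear (F : finFieldType) (P1 P2 P3 : sub6 F) : Prop :=
  [/\ is_point P1, is_point P2, is_point P3 & \dim (P1 + P2 + P3)%VS = 3%N].

Definition good_triple (F : finFieldType) (C : {fset flag F})
  (P Q1 Q2 : sub6 F) (f1 f2 f3 : flag F) : Prop :=
  let fs := [:: f1; f2; f3] in
  [/\ [/\ f1 \in C, f2 \in C & f3 \in C],
      (6 <= \dim (f1.1 + f2.1 + f3.1)%VS)%N,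
      (forall f, f \in fs -> ~~ (Q1 <= f.2)%VS /\ ~~ (Q2 <= f.2)%VS) &
      (forall i j : 'I_3, i != j ->
         let Ei := (nth f1 fs i).1 in let Ej := (nth f1 fs j).1 in
         (Ei :&: Ej)%VS = P /\
         ~~ (Q1 <= Ei + Ej)%VS /\ ~~ (Q2 <= Ei + Ej)%VS)].

(* Every plane and every solid lies in at most q + 1 flags of
   C, so forbidding a set BE of planes and a set BS of solids loses at most
   (q + 1)(|BE| + |BS|) flags of Delta_P(C).  The flags f1, f2, f3 are picked
   one after the other in Delta_P(C), forbidding the solids through the lines
   PQ1 and PQ2 (in (ii) also the solids through P2 that meet some S_i in a
   plane), the planes through P meeting a solid <E_i, Q_j> of an earlier
   choice in a line, and, for f3, the planes through P inside <E1, E2>.  These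
   numbers are Gaussian binomials, obtained by double counting, and the
   thresholds of the theorem exceed the total. *)

From HB Require Import structures.
From mathcomp Require Import all_boot all_order all_algebra all_field finmap.
From mathcomp Require Import ring zify.

Set Implicit Arguments. Unset Strict Implicit. Unset Printing Implicit Defensive.
Import GRing.Theory.

(* The subType structure of {vspace vT} is only exported by VectorInternalTheory. *)
Module VspaceFinite.
Import VectorInternalTheory.
HB.instance Definition _ (F : finFieldType) (vT : vectType F) :=
  [Finite of {vspace vT} by <:].
End VspaceFinite.
Import VspaceFinite.

Lemma sum_card_rel (T1 T2 : finType) (A : {set T1}) (B : {set T2})
    (R : T1 -> T2 -> bool) :
  \sum_(x in A) #|[set y in B | R x y]| = \sum_(y in B) #|[set x in A | R x y]|.
Proof.
have card_rel (T : finType) (D : {set T}) (P : pred T) :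
    #|[set y in D | P y]| = \sum_(y in D) P y.
  by rewrite -sum1dep_card big_mkcondr; apply: eq_bigr => y _; case: (P y).
under eq_bigr do rewrite card_rel.
by rewrite exchange_big; apply: eq_bigr => y _; rewrite card_rel.
Qed.

Lemma card_le_fibres (T1 T2 : finType) (A : {set T1}) (B : {set T2})
    (g : T1 -> T2) d :
  {in A, forall x, g x \in B} ->
  {in B, forall y, #|[set x in A | g x == y]| <= d} ->
  #|A| <= #|B| * d.
Proof.
move=> gAB fibre; rewrite -sum1_card (partition_big g (mem B)) //= -sum_nat_const.
by apply: leq_sum => y yB; rewrite sum1dep_card; exact: fibre.
Qed.

Lemma card_bigcup_seq (I : Type) (T : finType) (r : seq I) (A : I -> {set T}) :
  #|\bigcup_(i <- r) A i| <= \sum_(i <- r) #|A i|.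
Proof.
elim: r => [|i r IHr]; first by rewrite !big_nil cards0.
by rewrite !big_cons; apply: leq_trans (leq_card_setU _ _) _; rewrite leq_add2l.
Qed.

Lemma card_fset_set (T : finType) (A : {fset T}) : #|` A| = #|[set x in A]|.
Proof. by rewrite cardsE -card_finset; congr #|` _|; apply/fsetP => x; rewrite !inE. Qed.

Section Dimension.
Variables (K : fieldType) (vT : vectType K).
Implicit Types (U W P Q E : {vspace vT}).

Lemma dim_add_point U P :
  \dim P = 1 -> ~~ (P <= U)%VS -> \dim (U + P) = (\dim U).+1.
Proof.
move=> dP PU; rewrite dimv_disjoint_sum ?dP ?addn1 //; apply/eqP.
rewrite -dimv_eq0; have := dimvS (capvSr U P); rewrite dP leq_eqVlt ltnS leqn0.
case/orP=> [dUP|//]; have UP_P : (U :&: P)%VS = P.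
  by apply/eqP; rewrite eqEdim capvSr (eqP dUP) dP.
by move: PU; rewrite -UP_P capvSl.
Qed.

Lemma dim_add_line U (v : vT) : v \notin U -> \dim (U + <[v]>) = (\dim U).+1.
Proof.
move=> vU; have nz_v : v != 0%R by apply: contraNneq vU => ->; rewrite mem0v.
by apply: dim_add_point; rewrite ?dim_vline ?nz_v // -memvE.
Qed.

Lemma dim_lt_add U W : ~~ (W <= U)%VS -> \dim U < \dim (U + W).
Proof. by rewrite (ltn_leqif (dimv_leqif_sup (addvSl U W))) subv_add subvv. Qed.

Lemma dim_cap_lt U W : ~~ (U <= W)%VS -> \dim (U :&: W) < \dim U.
Proof. by rewrite (ltn_leqif (dimv_leqif_sup (capvSl U W))) subv_cap subvv. Qed.

Lemma dim_add_points P Q R :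
  \dim P = 1 -> \dim Q = 1 -> \dim R = 1 -> \dim (P + Q + R) = 3 ->
  \dim (P + Q) = 2.
Proof.
move=> dP dQ dR dPQR.
have := (dimv_add_leqif P Q).1; have := (dimv_add_leqif (P + Q) R).1.
rewrite dP dQ dR dPQR; lia.
Qed.

Lemma dim_add_planes E1 E2 P :
  \dim E1 = 3 -> \dim E2 = 3 -> \dim P = 1 -> (E1 :&: E2)%VS = P ->
  \dim (E1 + E2) = 5.
Proof. by move=> d1 d2 dP E12; have := dimv_sum_cap E1 E2; rewrite E12 d1 d2 dP; lia. Qed.

Lemma subv_add_point_of_dim_cap S S' P : \dim P = 1 -> ~~ (P <= S)%VS ->
  (P <= S')%VS -> \dim S' <= (\dim (S :&: S')).+1 -> (S' <= S + P)%VS.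
Proof.
move=> dP PS PS' dS'; have PSS' : ~~ (P <= S :&: S')%VS.
  by apply: contra PS => /subv_trans; apply; exact: capvSl.
have /eqP <- : ((S :&: S') + P == S')%VS.
  by rewrite eqEdim subv_add capvSr PS' dim_add_point.
by apply: addvS; rewrite ?capvSl.
Qed.

Definition planes_apart P Q1 Q2 E1 E2 :=
  (E1 :&: E2)%VS = P /\ ~~ (Q1 <= E1 + E2)%VS /\ ~~ (Q2 <= E1 + E2)%VS.

Lemma planes_apartC P Q1 Q2 E1 E2 :
  planes_apart P Q1 Q2 E1 E2 -> planes_apart P Q1 Q2 E2 E1.
Proof. by rewrite /planes_apart capvC addvC. Qed.

Lemma planes_meet_at_point P Q E1 E :
  \dim P = 1 -> \dim Q = 1 -> \dim E1 = 3 -> \dim E = 3 ->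
  (P <= E1)%VS -> (P <= E)%VS -> ~~ (Q <= E1)%VS -> \dim (E :&: (E1 + Q)) < 2 ->
  (E1 :&: E)%VS = P /\ ~~ (Q <= E1 + E)%VS.
Proof.
move=> dP dQ dE1 dE PE1 PE QE1 small.
have dE1Q : \dim (E1 + Q) = 4 by rewrite dim_add_point ?dE1.
have E1E_P : (E1 :&: E)%VS = P.
  apply/eqP; rewrite eq_sym eqEdim subv_cap PE1 PE dP -ltnS.
  by apply: leq_ltn_trans small; rewrite capvC dimvS ?capvS ?addvSl.
split=> //; apply: contra_ltnN small => QE1E.
have E1QE : (E + (E1 + Q) <= E1 + E)%VS by rewrite !subv_add addvSl addvSr QE1E.
have := dimvS E1QE; have := dimv_sum_cap E (E1 + Q).
by rewrite (dim_add_planes dE1 dE dP E1E_P) dE dE1Q; lia.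
Qed.

End Dimension.

(* gauss_n_k q is the Gaussian binomial [n, k]_q, in factored form. *)
Definition gauss_3_1 (q : nat) := q ^ 2 + q + 1.
Definition gauss_4_1 (q : nat) := (q + 1) * (q ^ 2 + 1).
Definition gauss_5_1 (q : nat) := q ^ 4 + q ^ 3 + q ^ 2 + q + 1.
Definition gauss_4_2 (q : nat) := (q ^ 2 + 1) * (q ^ 2 + q + 1).
Definition gauss_5_2 (q : nat) := (q ^ 2 + 1) * (q ^ 4 + q ^ 3 + q ^ 2 + q + 1).
Definition line_meeting_bound (q : nat) := gauss_3_1 q * (q ^ 4 + q ^ 3 + q ^ 2 + 1).

Section SubspaceCounting.
Variables (F : finFieldType) (n : nat).
Local Notation V := 'rV[F]_n.
Local Notation q := #|F|.
Implicit Types (B U X : {vspace V}).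

Lemma q_gt1 : 1 < q. Proof. exact: finNzRing_gt1. Qed.

Definition subv_between B U k :=
  [set X | [&& (B <= X)%VS, (X <= U)%VS & \dim X == \dim B + k]].

(* The number of k-tuples of vectors of an a-space that are independent modulo
   a fixed b-subspace. *)
Definition qprod a b k := \prod_(i < k) (q ^ a - q ^ (b + i)).

Lemma qprodS a b k : qprod a b k.+1 = (q ^ a - q ^ b) * qprod a b.+1 k.
Proof.
rewrite /qprod big_ord_recl addn0; congr (_ * _).
by apply: eq_bigr => i _; rewrite /bump /= -addSnnS.
Qed.

Lemma qprod_gt0 a b k : b + k <= a -> 0 < qprod a b k.
Proof.
move=> bka; rewrite prodn_gt0 // => i; rewrite subn_gt0 ltn_exp2l ?q_gt1 //.
by apply: leq_trans bka; rewrite ltn_add2l.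
Qed.

Lemma card_vspaceD B X :
  (B <= X)%VS -> #|[set v in X] :\: [set v in B]| = q ^ \dim X - q ^ \dim B.
Proof.
move=> BX; rewrite cardsD (setIidPr _) ?cardsE ?card_vspace //.
by apply/subsetP => v; rewrite !inE => /(subvP BX).
Qed.

Lemma subv_between_through B U k v : v \in U -> v \notin B ->
  [set X in subv_between B U k.+1 | v \in X] = subv_between (B + <[v]>) U k.
Proof.
move=> vU vB; apply/setP => X; rewrite !inE dim_add_line // subv_add -memvE.
by rewrite addSnnS; case: (v \in X); rewrite ?andbF ?andbT.
Qed.

Lemma card_subv_between B U k : (B <= U)%VS -> \dim B + k <= \dim U ->
  #|subv_between B U k| * qprod (\dim B + k) (\dim B) k = qprod (\dim U) (\dim B) k.
Proof.
elim: k B => [|k IHk] B BU bkU.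
  rewrite /qprod !big_ord0 muln1 -[RHS](cards1 B); apply: eq_card => X.
  rewrite !inE addn0; apply/and3P/eqP => [[BX _ /eqP dX]|->]; last first.
    by split; rewrite ?subvv.
  by move: (eqEdim B X); rewrite BX dX leqnn => /eqP.
(* Double count the pairs (v, X) with v in U :\ B, X in S and v in X. *)
set b := \dim B; pose S := subv_between B U k.+1.
pose Bs := [set v in U] :\: [set v in B].
have count_X X : X \in S -> #|[set v in Bs | v \in X]| = q ^ (b + k.+1) - q ^ b.
  rewrite inE => /and3P[BX XU /eqP dX]; rewrite -dX -card_vspaceD //.
  apply: eq_card => v; rewrite !inE.
  case vX: (v \in X); last by rewrite !andbF.
  by rewrite !andbT (subvP XU _ vX) andbT.
have count_v v : v \in Bs ->
    #|[set X in S | v \in X]| * qprod (b + k.+1) b.+1 k = qprod (\dim U) b.+1 k.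
  rewrite !inE => /andP[vB vU]; rewrite subv_between_through //.
  have dBv : \dim (B + <[v]>) = b.+1 by exact: dim_add_line.
  have BvU : (B + <[v]> <= U)%VS by rewrite subv_add BU -memvE.
  by rewrite -addSnnS -dBv IHk // dBv addSnnS.
have := sum_card_rel S Bs (fun X v => v \in X).
under eq_bigr do rewrite count_X //.
rewrite sum_nat_const => /(congr1 (muln^~ (qprod (b + k.+1) b.+1 k))).
rewrite big_distrl /= (eq_bigr _ count_v) sum_nat_const card_vspaceD // -/b.
by rewrite -!mulnA -!qprodS.
Qed.

Lemma card_subv_between_eq B U k r : (B <= U)%VS -> \dim B + k <= \dim U ->
  qprod (\dim U) (\dim B) k = r * qprod (\dim B + k) (\dim B) k ->
  #|subv_between B U k| = r.
Proof.
move=> BU bkU e; apply/eqP.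
by rewrite -(eqn_pmul2r (qprod_gt0 (leqnn (\dim B + k)))) card_subv_between // e.
Qed.

Lemma qprod_int a b k : b + k <= a ->
  ((qprod a b k)%:R = \prod_(i < k) ((q%:R : int) ^+ a - q%:R ^+ (b + i)))%R.
Proof.
move=> bka; rewrite natr_prod; apply: eq_bigr => i _.
rewrite natrB ?natrX // leq_pexp2l ?(ltnW q_gt1) //.
by apply: leq_trans bka; rewrite leq_add2l ltnW.
Qed.

Local Ltac qprod_ring :=
  apply/eqP; rewrite -(Num.Theory.eqr_nat int) natrM !qprod_int //;
  rewrite !big_ord_recl !big_ord0 ?lift0 /= ?(natrD, natrM, natrX) ?exprD; apply/eqP; ring.

Lemma card_solids_through_line L U : (L <= U)%VS -> \dim L = 2 -> \dim U = 7 ->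
  #|subv_between L U 2| = gauss_5_2 q.
Proof. by move=> LU dL dU; apply: card_subv_between_eq; rewrite ?dL ?dU //; qprod_ring. Qed.

Lemma card_planes_through_line L U : (L <= U)%VS -> \dim L = 2 -> \dim U = 7 ->
  #|subv_between L U 1| = gauss_5_1 q.
Proof. by move=> LU dL dU; apply: card_subv_between_eq; rewrite ?dL ?dU //; qprod_ring. Qed.

Lemma card_planes_through_line_in_solid L W : (L <= W)%VS -> \dim L = 2 -> \dim W = 4 ->
  #|subv_between L W 1| = q + 1.
Proof. by move=> LW dL dW; apply: card_subv_between_eq; rewrite ?dL ?dW //; qprod_ring. Qed.

Lemma card_lines_through_point_in_solid P W : (P <= W)%VS -> \dim P = 1 -> \dim W = 4 ->
  #|subv_between P W 1| = gauss_3_1 q.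
Proof. by move=> PW dP dW; apply: card_subv_between_eq; rewrite ?dP ?dW //; qprod_ring. Qed.

Lemma card_planes_through_point_in_solid P W : (P <= W)%VS -> \dim P = 1 -> \dim W = 4 ->
  #|subv_between P W 2| = gauss_3_1 q.
Proof. by move=> PW dP dW; apply: card_subv_between_eq; rewrite ?dP ?dW //; qprod_ring. Qed.

Lemma card_planes_through_point_in_4space P U : (P <= U)%VS -> \dim P = 1 -> \dim U = 5 ->
  #|subv_between P U 2| = gauss_4_2 q.
Proof. by move=> PU dP dU; apply: card_subv_between_eq; rewrite ?dP ?dU //; qprod_ring. Qed.

Lemma card_solids_through_point_in_4space P U : (P <= U)%VS -> \dim P = 1 -> \dim U = 5 ->
  #|subv_between P U 3| = gauss_4_1 q.
Proof. by move=> PU dP dU; apply: card_subv_between_eq; rewrite ?dP ?dU //; qprod_ring. Qed.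

End SubspaceCounting.

Section PG6.
Variable F : finFieldType.
Local Notation V := 'rV[F]_7.
Local Notation q := #|F|.
Implicit Types (P Q L E W : {vspace V}).

Lemma dim_fullv7 : \dim (fullv : {vspace V}) = 7.
Proof. by rewrite dimvf /dim /=. Qed.

Definition line_meeting_planes P W :=
  [set E | [&& (P <= E)%VS, \dim E == 3 & 1 < \dim (E :&: W)]].

Lemma card_line_meeting_planes P W : (P <= W)%VS -> \dim P = 1 -> \dim W = 4 ->
  #|line_meeting_planes P W| <= line_meeting_bound q.
Proof.
(* The planes not inside W are fibred over their trace on W, a line. *)
move=> PW dP dW; set outer := [set E in line_meeting_planes P W | ~~ (E <= W)%VS].
have split_in_W : line_meeting_planes P W \subset subv_between P W 2 :|: outer.
  apply/subsetP => E; rewrite !inE => /and3P[PE /eqP dE EW].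
  by case: (E <= W)%VS; rewrite PE dE dP ?EW.
have trace_line E : E \in outer -> (E :&: W)%VS \in subv_between P W 1.
  rewrite !inE => /andP[/and3P[PE /eqP dE EW] nEW]; rewrite subv_cap PE PW capvSr dP.
  by rewrite eqn_leq EW andbT -ltnS -[X in _ < X]dE dim_cap_lt.
have fibre L : L \in subv_between P W 1 ->
    #|[set E in outer | (E :&: W)%VS == L]| <= q ^ 4 + q ^ 3 + q ^ 2.
  rewrite inE => /and3P[_ LW /eqP dL]; rewrite dP in dL.
  have -> : q ^ 4 + q ^ 3 + q ^ 2 = gauss_5_1 q - (q + 1).
    by rewrite /gauss_5_1 -[in RHS]addnA addnK.
  rewrite -(card_planes_through_line (subvf L)) ?dim_fullv7 //.
  rewrite -(card_planes_through_line_in_solid LW) //.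
  have W_in_fullv : subv_between L W 1 \subset subv_between L fullv 1.
    by apply/subsetP => E; rewrite !inE subvf => /and3P[-> _ ->].
  rewrite -(setIidPr W_in_fullv) -cardsD.
  apply/subset_leq_card/subsetP => E; rewrite !inE.
  case/andP=> [/andP[/and3P[_ /eqP dE _] nEW] /eqP EW_L].
  by rewrite dL dE -EW_L capvSl subvf (negbTE nEW).
apply: leq_trans (subset_leq_card split_in_W) _; apply: leq_trans (leq_card_setU _ _) _.
rewrite card_planes_through_point_in_solid //.
have := card_le_fibres trace_line fibre.
rewrite card_lines_through_point_in_solid // => card_outer.
by apply: leq_trans (leq_add (leqnn _) card_outer) _; rewrite /line_meeting_bound; nia.
Qed.

Lemma exists_Delta_avoiding (C : {fset flag F}) P (BE BS : {set {vspace V}}) :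
  bounded_mult C -> q.+1 * (#|BE| + #|BS|) < #|` Delta P C| ->
  exists f, [/\ f \in C, (P <= f.1)%VS, f.1 \notin BE & f.2 \notin BS].
Proof.
case=> multE multS large; pose D := [set f in Delta P C].
have card_D_hit (g : flag F -> {vspace V}) (Y : {set {vspace V}}) :
    (forall Z, #|` [fset f in C | g f == Z]%fset| <= q.+1) ->
    #|[set f in D | g f \in Y]| <= #|Y| * q.+1.
  move=> multg; apply: (card_le_fibres (g := g)) => [f|Z _]; first by rewrite inE => /andP[].
  apply: leq_trans (multg Z); rewrite card_fset_set.
  by apply/subset_leq_card/subsetP => f; rewrite !inE => /andP[/andP[/andP[-> _] _] ->].
case: (pickP [pred f in D | (f.1 \notin BE) && (f.2 \notin BS)]) => [f|none].
  by rewrite !inE => /and3P[/andP[fC PE] nBE nBS]; exists f.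
have D_hit : D \subset [set f in D | f.1 \in BE] :|: [set f in D | f.2 \in BS].
  apply/subsetP => f; rewrite inE => fD; have := none f.
  by rewrite /= in_setU !in_set fD; case: (f.1 \in BE) (f.2 \in BS) => [] [].
have := leq_trans (subset_leq_card D_hit) (leq_card_setU _ _).
move/leq_trans/(_ (leq_add (card_D_hit _ BE multE) (card_D_hit _ BS multS))).
by rewrite -mulnDl mulnC -card_fset_set leqNgt large.
Qed.

(* For P outside S: the solids through P that meet S in at least a plane are
   exactly those inside <S, P>. *)
Definition solids_meeting_in_plane P S := subv_between P (S + P) 3.

Lemma card_solids_meeting_in_plane P S : \dim P = 1 -> \dim S = 4 -> ~~ (P <= S)%VS ->
  #|solids_meeting_in_plane P S| = gauss_4_1 q.
Proof.
move=> dP dS PS; apply: card_solids_through_point_in_4space; rewrite ?addvSr //.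
by rewrite dim_add_point ?dS.
Qed.

Lemma dim_cap_solids_le2 P S S' : \dim P = 1 -> \dim S' = 4 -> ~~ (P <= S)%VS ->
  (P <= S')%VS -> S' \notin solids_meeting_in_plane P S -> \dim (S :&: S') <= 2.
Proof.
move=> dP dS' PS PS'; rewrite inE PS' dP dS' /= andbT leqNgt; apply: contraNN => d3.
by apply: subv_add_point_of_dim_cap; rewrite ?dS'.
Qed.

End PG6.

Section GreedyTriple.
Variables (F : finFieldType) (C : {fset flag F}) (P Q1 Q2 : {vspace 'rV[F]_7}).
Variable X : {set {vspace 'rV[F]_7}}.
Local Notation q := #|F|.
Hypotheses (flagsC : forall f, f \in C -> is_flag23 f) (multC : bounded_mult C).
Hypothesis ncol : noncollinear P Q1 Q2.
Hypothesis large_Delta : q.+1 * (2 * gauss_5_2 q + 4 * line_meeting_bound q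
  + gauss_4_2 q + #|X|) < #|` Delta P C|.

Let dP : \dim P = 1. Proof. by case: ncol => /eqP. Qed.
Let dQ1 : \dim Q1 = 1. Proof. by case: ncol => _ /eqP. Qed.
Let dQ2 : \dim Q2 = 1. Proof. by case: ncol => _ _ /eqP. Qed.
Let dPQ1 : \dim (P + Q1) = 2.
Proof. by case: ncol => _ _ _; apply: dim_add_points. Qed.
Let dPQ2 : \dim (P + Q2) = 2.
Proof.
case: ncol => _ _ _ dPQQ; apply: (dim_add_points (R := Q1)) => //.
by rewrite -addvA (addvC Q2) addvA.
Qed.

Definition admissible (f : flag F) :=
  [/\ f \in C, (P <= f.1)%VS, ~~ (Q1 <= f.2)%VS, ~~ (Q2 <= f.2)%VS & f.2 \notin X].

Lemma admissible_plane f :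
  admissible f -> [/\ \dim f.1 = 3, ~~ (Q1 <= f.1)%VS & ~~ (Q2 <= f.1)%VS].
Proof.
case=> /flagsC /and3P[/eqP dE _ ES] _ Q1S Q2S _.
by split=> //; [apply: contra Q1S | apply: contra Q2S] => /subv_trans; apply.
Qed.

Lemma exists_admissible (BE : {set {vspace 'rV[F]_7}}) :
  #|BE| <= 4 * line_meeting_bound q + gauss_4_2 q ->
  exists2 f, admissible f & f.1 \notin BE.
Proof.
move=> card_BE.
pose BS := subv_between (P + Q1) fullv 2 :|: subv_between (P + Q2) fullv 2 :|: X.
have card_BS : #|BS| <= 2 * gauss_5_2 q + #|X|.
  apply: leq_trans (leq_card_setU _ _) _; rewrite leq_add2r mul2n -addnn.
  apply: leq_trans (leq_card_setU _ _) _.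
  by rewrite !card_solids_through_line ?subvf ?dim_fullv7.
have [|f [fC PE nBE]] := exists_Delta_avoiding (P := P) (BE := BE) (BS := BS) multC.
  apply: leq_ltn_trans large_Delta; rewrite leq_mul2l; apply/orP; right.
  by apply: leq_trans (leq_add card_BE card_BS) _; lia.
rewrite !in_setU !negb_or => /andP[/andP[nPQ1 nPQ2] nX].
have /and3P[_ /eqP dS ES] := flagsC fC.
have off_solid Q : \dim (P + Q) = 2 -> f.2 \notin subv_between (P + Q) fullv 2 ->
    ~~ (Q <= f.2)%VS.
  move=> dPQ; rewrite inE subvf dS dPQ /= andbT; apply: contra => QS.
  by rewrite subv_add QS (subv_trans PE ES).
by exists f => //; split; rewrite ?off_solid.
Qed.

Lemma exists_admissible_apart f1 f2 (Y : {set {vspace 'rV[F]_7}}) :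
  admissible f1 -> admissible f2 -> #|Y| <= gauss_4_2 q ->
  exists2 f, admissible f &
    [/\ f.1 \notin Y, planes_apart P Q1 Q2 f1.1 f.1 & planes_apart P Q1 Q2 f2.1 f.1].
Proof.
move=> adm1 adm2 card_Y.
pose bad (g : flag F) :=
  line_meeting_planes P (g.1 + Q1) :|: line_meeting_planes P (g.1 + Q2).
have card_bad g : admissible g -> #|bad g| <= 2 * line_meeting_bound q.
  move=> adm_g; have [[_ PE _ _ _] [dE QE1 QE2]] := (adm_g, admissible_plane adm_g).
  apply: leq_trans (leq_card_setU _ _) _; rewrite mul2n -addnn.
  by apply: leq_add; apply: card_line_meeting_planes;
    rewrite ?dim_add_point ?dE // (subv_trans PE) ?addvSl.
have apart g f : admissible g -> admissible f -> f.1 \notin bad g ->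
    planes_apart P Q1 Q2 g.1 f.1.
  move=> adm_g adm_f; have [[_ PG _ _ _] [dG QG1 QG2]] := (adm_g, admissible_plane adm_g).
  have [[_ PF _ _ _] [dF _ _]] := (adm_f, admissible_plane adm_f).
  rewrite in_setU !inE PF dF /= => /norP[]; rewrite -!leqNgt => small1 small2.
  have [GF_P QGF1] := planes_meet_at_point dP dQ1 dG dF PG PF QG1 small1.
  by have [_ QGF2] := planes_meet_at_point dP dQ2 dG dF PG PF QG2 small2.
have [|f adm_f] := exists_admissible (BE := bad f1 :|: bad f2 :|: Y).
  apply: leq_trans (leq_card_setU _ _) _.
  apply: leq_trans (leq_add (leq_card_setU _ _) card_Y) _; rewrite leq_add2r.
  by apply: leq_trans (leq_add (card_bad _ adm1) (card_bad _ adm2)) _; lia.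
rewrite 2!in_setU 2!negb_or => /andP[/andP[nbad1 nbad2] nY].
by exists f => //; split; [|exact: apart adm1 adm_f nbad1|exact: apart adm2 adm_f nbad2].
Qed.

Lemma good_triple_of_admissible f1 f2 f3 :
  admissible f1 -> admissible f2 -> admissible f3 ->
  6 <= \dim (f1.1 + f2.1 + f3.1) -> planes_apart P Q1 Q2 f1.1 f2.1 ->
  planes_apart P Q1 Q2 f1.1 f3.1 -> planes_apart P Q1 Q2 f2.1 f3.1 ->
  good_triple C P Q1 Q2 f1 f2 f3.
Proof.
move=> [f1C _ Q11 Q21 _] [f2C _ Q12 Q22 _] [f3C _ Q13 Q23 _] d6 a12 a13 a23.
split=> [//|//|f|]; first by rewrite !inE => /or3P[] /eqP ->.
have [a21 a31 a32] := And3 (planes_apartC a12) (planes_apartC a13) (planes_apartC a23).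
by move=> [[|[|[|i]]] ?] [[|[|[|j]]] ?].
Qed.

Lemma exists_good_triple : exists f1 f2 f3, good_triple C P Q1 Q2 f1 f2 f3 /\
  (forall f, f \in [:: f1; f2; f3] -> f.2 \notin X /\ (P <= f.1)%VS).
Proof.
have [|f1 adm1 _] := exists_admissible (BE := set0); first by rewrite cards0.
have [|f2 adm2 [_ a12 _]] := exists_admissible_apart adm1 adm1 (Y := set0).
  by rewrite cards0.
have [[_ PE1 _ _ _] [dE1 _ _]] := (adm1, admissible_plane adm1).
have [[_ PE2 _ _ _] [dE2 _ _]] := (adm2, admissible_plane adm2).
have [E12_P _] := a12; have dE12 := dim_add_planes dE1 dE2 dP E12_P.
have [|f3 adm3 [nY a13 a23]] :=
  exists_admissible_apart adm1 adm2 (Y := subv_between P (f1.1 + f2.1) 2).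
  by rewrite card_planes_through_point_in_4space ?(subv_trans PE1) ?addvSl.
have [[_ PE3 _ _ _] [dE3 _ _]] := (adm3, admissible_plane adm3).
have d6 : 6 <= \dim (f1.1 + f2.1 + f3.1).
  by move: nY; rewrite inE PE3 dP dE3 /= andbT => /dim_lt_add; rewrite dE12.
exists f1, f2, f3; split; first exact: good_triple_of_admissible.
by move=> f; rewrite !inE => /or3P[] /eqP ->; [case: adm1|case: adm2|case: adm3].
Qed.

End GreedyTriple.

Lemma noncollinearC (F : finFieldType) (P1 P2 P3 : sub6 F) :
  noncollinear P1 P2 P3 -> noncollinear P2 P1 P3.
Proof. by case=> *; split; rewrite // (addvC P2). Qed.

Lemma exclusion_bound_i q : 0 < q ->
  2 * gauss_5_2 q + 4 * line_meeting_bound q + gauss_4_2 q <=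
  6 * q ^ 6 + 10 * q ^ 5 + 17 * q ^ 4 + 15 * q ^ 3 + 15 * q ^ 2 + 9 * q + 5.
Proof.
case: q => // s _; set L := (X in X <= _); set R := (X in _ <= X).
have -> : R = L + (2 * s.+1 ^ 3 + s.+1 ^ 2 + 2 * s).
  by rewrite /L /R /gauss_5_2 /line_meeting_bound /gauss_3_1 /gauss_4_2; ring.
exact: leq_addr.
Qed.

Lemma exclusion_bound_ii q : 1 < q ->
  2 * gauss_5_2 q + 4 * line_meeting_bound q + gauss_4_2 q + 3 * gauss_4_1 q <=
  6 * q ^ 6 + 10 * q ^ 5 + 17 * q ^ 4 + 18 * q ^ 3 + 15 * q ^ 2 + 9 * q + 5.
Proof.
case: q => [|[|s]] // _; set L := (X in X <= _); set R := (X in _ <= X).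
have -> : R = L + (2 * s ^ 3 + 10 * s ^ 2 + 15 * s + 1).
  rewrite /L /R /gauss_5_2 /line_meeting_bound /gauss_3_1 /gauss_4_2 /gauss_4_1; ring.
exact: leq_addr.
Qed.

Local Open Scope fset_scope.

Theorem lemma4p1 (F : finFieldType) (C : {fset flag F}) (P1 P2 P3 : sub6 F) :
  indep_flags C -> bounded_mult C -> noncollinear P1 P2 P3 ->
  let q := #|F| in
  (((q + 1) * (6 * q ^ 6 + 10 * q ^ 5 + 17 * q ^ 4 + 15 * q ^ 3 + 15 * q ^ 2
              + 9 * q + 5) < #|` Delta P1 C|)%N ->
    exists f1 f2 f3, good_triple C P1 P2 P3 f1 f2 f3)
  /\
  (forall f1 f2 f3, good_triple C P1 P2 P3 f1 f2 f3 ->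
    ((q + 1) * (6 * q ^ 6 + 10 * q ^ 5 + 17 * q ^ 4 + 18 * q ^ 3 + 15 * q ^ 2
                + 9 * q + 5) < #|` Delta P2 C|)%N ->
    exists g1 g2 g3, good_triple C P2 P1 P3 g1 g2 g3 /\
      (forall f g, f \in [:: f1; f2; f3] -> g \in [:: g1; g2; g3] ->
         (\dim (f.2 :&: g.2)%VS <= 2)%N)).
Proof.
move=> [flagsC _] multC ncol q; split=> [large | f1 f2 f3 tri large].
  have [|g1 [g2 [g3 [tri _]]]] := exists_good_triple (X := set0) flagsC multC ncol.
    apply: leq_ltn_trans large; rewrite cards0 addn0 addn1 leq_mul2l.
    by rewrite exclusion_bound_i ?orbT // (ltnW (q_gt1 F)).
  by exists g1, g2, g3.
have [[f1C f2C f3C] _ P2_off _] := tri.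
have solid_f f : f \in [:: f1; f2; f3] -> \dim f.2 = 4 /\ ~~ (P2 <= f.2)%VS.
  move=> fi; split; last exact: (P2_off f fi).1.
  have fC : f \in C by move: fi; rewrite !inE => /or3P[] /eqP ->.
  by case/and3P: (flagsC f fC) => _ /eqP.
have [_ /eqP dP2 _ _] := ncol.
pose X := (\bigcup_(f <- [:: f1; f2; f3]) solids_meeting_in_plane P2 f.2)%SET.
have [|g1 [g2 [g3 [tri' far]]]] :=
    exists_good_triple (X := X) flagsC multC (noncollinearC ncol).
  apply: leq_ltn_trans large; rewrite addn1 leq_mul2l.
  apply/orP; right; apply: leq_trans (exclusion_bound_ii (q_gt1 F)); rewrite leq_add2l.
  apply: leq_trans (card_bigcup_seq _ _) _.
  rewrite big_seq (eq_bigr (fun=> gauss_4_1 q)) => [|f fi]; last first.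
    by have [dS PS] := solid_f f fi; rewrite card_solids_meeting_in_plane.
  by rewrite -big_seq !big_cons big_nil /q; lia.
exists g1, g2, g3; split=> // f g fi gi.
have [[g1C g2C g3C] _ _ _] := tri'; have [gX PE] := far g gi.
have /and3P[_ /eqP dS' ES'] : is_flag23 g.
  by apply: flagsC; move: gi; rewrite !inE => /or3P[] /eqP ->.
apply: dim_cap_solids_le2 dP2 dS' (solid_f f fi).2 (subv_trans PE ES') _.
by apply: contra gX => gS; rewrite /X bigcup_seq; apply/bigcupP; exists f.
Qed.
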